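(* Let $\mathcal{D}\subset\mathbb{R}^d$, let $k$ be a positive definite kernel on $\mathcal{D}\times\mathcal{D}$, and let $\epsilon\ge 0$. Let $f^*:\mathcal{D}\to\mathbb{R}$ and let $\tilde f:\mathcal{D}\to\mathbb{R}$ satisfy $|\tilde f(x)-f^*(x)|\le\epsilon$ for all $x\in\mathcal{D}$; write $m(x)=f^*(x)-\tilde f(x)$, so $m:\mathcal{D}\to[-\epsilon,\epsilon]$. Let $x_1,\dots,x_t\in\mathcal{D}$ ($t\ge1$) be any points and $\eta_1,\dots,\eta_t$ any real noise values; set $y^*_i=f^*(x_i)+\eta_i$ and $y_i=y^*_i-m(x_i)=\tilde f(x_i)+\eta_i$. For $\lambda>0$ define $$\mu_t(x)=k_t(x)^T(K_t+\lambda I_t)^{-1}Y_t,\qquad \mu^*_t(x)=k_t(x)^T(K_t+\lambda I_t)^{-1}Y^*_t,$$ $$\sigma_t^2(x)=k(x,x)-k_t(x)^T(K_t+\lambda I_t)^{-1}k_t(x),$$ where $k_t(x)=[k(x_1,x),\dots,k(x_t,x)]^T$, $K_t=[k(x_s,x_{s'})]_{s,s'\le t}$, $Y_t=[y_1,\dots,y_t]^T$, $Y^*_t=[y^*_1,\dots,y^*_t]^T$. Then for every $x\in\mathcal{D}$, $$|\mu_t(x)-\mu^*_t(x)|\le \frac{\epsilon\sqrt{t}}{\sqrt{\lambda}}\,\sigma_t(x).$$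
   Context: $\mu_t,\sigma_t^2$ are the Gaussian-process posterior mean and variance (kernel ridge regression estimates) with regularization/noise parameter $\lambda$; $\mu^*_t$ is the same mean estimator computed from observations of $f^*$ rather than of $\tilde f$. *)

From mathcomp Require Import all_boot all_order all_algebra.
Set Implicit Arguments. Unset Strict Implicit. Unset Printing Implicit Defensive.
Import Order.TTheory GRing.Theory Num.Theory.
Local Open Scope ring_scope.

Section GP.
Variables (R : rcfType) (d : nat).
Notation pt := 'rV[R]_d.

(* Positive definite kernel on D x D (in the kernel-methods sense):
   symmetric on D, and every Gram matrix of points of D is positive
   semidefinite. *)
Definition pd_kernel (D : pt -> Prop) (k : pt -> pt -> R) : Prop :=
  (forall x y, D x -> D y -> k x y = k y x) /\
  (forall (n : nat) (xs : 'I_n -> pt) (c : 'I_n -> R),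
      (forall i, D (xs i)) ->
      0 <= \sum_(i < n) \sum_(j < n) c i * c j * k (xs i) (xs j)).

Definition kvec (k : pt -> pt -> R) (t : nat) (xs : 'I_t -> pt) (x : pt)
  : 'cV[R]_t := \col_i k (xs i) x.

Definition gram (k : pt -> pt -> R) (t : nat) (xs : 'I_t -> pt) : 'M[R]_t :=
  \matrix_(i, j) k (xs i) (xs j).

Definition gp_mean (k : pt -> pt -> R) (lam : R) (t : nat) (xs : 'I_t -> pt)
  (Y : 'cV[R]_t) (x : pt) : R :=
  ((kvec k xs x)^T *m invmx (gram k xs + lam%:M) *m Y) 0 0.

Definition gp_var (k : pt -> pt -> R) (lam : R) (t : nat) (xs : 'I_t -> pt)
  (x : pt) : R :=
  k x x - ((kvec k xs x)^T *m invmx (gram k xs + lam%:M) *m kvec k xs x) 0 0.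

End GP.

From mathcomp Require Import all_boot all_order all_algebra.
From mathcomp Require Import ring lra.
Set Implicit Arguments. Unset Strict Implicit. Unset Printing Implicit Defensive.
Import Order.TTheory GRing.Theory Num.Theory.
Local Open Scope ring_scope.

(** Let w = k_t(x)^T (K_t + lam I)^-1, so that the two means differ by
    w (Y_t - Y*_t), a vector with entries -m(x_i) in [-eps, eps]; by
    Cauchy-Schwarz the difference is at most eps sqrt(t) |w|.  Positive
    definiteness of k on the t + 1 points x_1, ..., x_t, x with coefficients
    (w, -1) gives w K_t w^T - 2 w k_t(x) + k(x, x) >= 0, and since
    w k_t(x) = w (K_t + lam I) w^T = w K_t w^T + lam |w|^2, this says
    sigma_t(x)^2 >= lam |w|^2. *)

Section RowVectors.
Variables (R : realFieldType) (n : nat).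

Lemma CauchySchwarz_sum (a b : 'I_n -> R) :
  (\sum_i a i * b i) ^+ 2 <= (\sum_i a i ^+ 2) * (\sum_i b i ^+ 2).
Proof.
have lagrange_ge0 : 0 <= \sum_i \sum_j (a i * b j - a j * b i) ^+ 2.
  by apply: sumr_ge0 => i _; apply: sumr_ge0 => j _; exact: sqr_ge0.
have E1 : (\sum_i a i ^+ 2) * (\sum_i b i ^+ 2) =
          \sum_i \sum_j a i ^+ 2 * b j ^+ 2.
  by rewrite big_distrl; apply: eq_bigr => i _; rewrite big_distrr.
have E2 : (\sum_i a i ^+ 2) * (\sum_i b i ^+ 2) =
          \sum_i \sum_j a j ^+ 2 * b i ^+ 2.
  rewrite mulrC big_distrl; apply: eq_bigr => i _; rewrite big_distrr /=.
  by apply: eq_bigr => j _; rewrite mulrC.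
have E3 : (\sum_i a i * b i) ^+ 2 = \sum_i \sum_j (a i * b i) * (a j * b j).
  by rewrite expr2 big_distrl; apply: eq_bigr => i _; rewrite big_distrr.
have E : \sum_i \sum_j (a i * b j - a j * b i) ^+ 2 =
    \sum_i \sum_j a i ^+ 2 * b j ^+ 2 + \sum_i \sum_j a j ^+ 2 * b i ^+ 2
    - 2 * \sum_i \sum_j (a i * b i) * (a j * b j).
  rewrite mulr_sumr -big_split -sumrB /=; apply: eq_bigr => i _.
  rewrite mulr_sumr -big_split -sumrB /=; apply: eq_bigr => j _.
  ring.
rewrite E -E1 -E2 -E3 in lagrange_ge0.
lra.
Qed.

Lemma mulmx_trmxE (u : 'rV[R]_n) : (u *m u^T) 0 0 = \sum_i u 0 i ^+ 2.
Proof. by rewrite mxE; apply: eq_bigr => i _; rewrite mxE expr2. Qed.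

Lemma mulmx_trmx_ge0 (u : 'rV[R]_n) : 0 <= (u *m u^T) 0 0.
Proof. by rewrite mulmx_trmxE; apply: sumr_ge0 => i _; exact: sqr_ge0. Qed.

Lemma mulmx_trmx_eq0 (u : 'rV[R]_n) : ((u *m u^T) 0 0 == 0) = (u == 0).
Proof.
apply/eqP/eqP => [uu0|->]; last by rewrite mul0mx mxE.
apply/rowP => j; rewrite mxE; apply/eqP; rewrite -sqrf_eq0; apply/eqP.
apply: (@psumr_eq0P _ _ (fun _ => true) (fun i => u 0 i ^+ 2)) => //.
  by move=> i _; exact: sqr_ge0.
by rewrite -mulmx_trmxE.
Qed.

Lemma mulmx_trmx_le (u : 'rV[R]_n) (e : R) :
  (forall i, `|u 0 i| <= e) -> (u *m u^T) 0 0 <= n%:R * e ^+ 2.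
Proof.
move=> u_le; rewrite mulmx_trmxE -[n in n%:R](card_ord n) mulr_natl -sumr_const.
apply: ler_sum => i _; have e_ge0 : 0 <= e := le_trans (normr_ge0 _) (u_le i).
by rewrite -real_normK ?num_real // ler_sqr ?nnegrE.
Qed.

Lemma CauchySchwarz_mx (u v : 'rV[R]_n) :
  (u *m v^T) 0 0 ^+ 2 <= (u *m u^T) 0 0 * (v *m v^T) 0 0.
Proof.
rewrite !mulmx_trmxE mxE.
under eq_bigr do rewrite mxE.
exact: CauchySchwarz_sum.
Qed.

Lemma form_add_scalar_mx (A : 'M[R]_n) (lam : R) (u : 'rV[R]_n) :
  (u *m (A + lam%:M) *m u^T) 0 0 = (u *m A *m u^T) 0 0 + lam * (u *m u^T) 0 0.
Proof.
by rewrite mulmxDr mul_mx_scalar mulmxDl -scalemxAl [LHS]mxE [X in _ + X]mxE.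
Qed.

Lemma psd_add_scalar_unitmx (A : 'M[R]_n) (lam : R) :
  (forall u : 'rV_n, 0 <= (u *m A *m u^T) 0 0) -> 0 < lam ->
  A + lam%:M \in unitmx.
Proof.
move=> A_psd lam_gt0; rewrite unitmxE unitfE; apply/det0P => -[u u_neq0 uA0].
have : (u *m (A + lam%:M) *m u^T) 0 0 = 0 by rewrite uA0 mul0mx mxE.
apply/eqP; rewrite form_add_scalar_mx gt_eqF // ltr_wpDl //.
by rewrite mulr_gt0 // lt_def mulmx_trmx_eq0 u_neq0 mulmx_trmx_ge0.
Qed.

End RowVectors.

Definition ext_last (T : Type) (t : nat) (f : 'I_t -> T) (a : T)
  (i : 'I_(t + 1)) : T :=
  if split i is inl j then f j else a.

Lemma sum_ext_last2 (V : nmodType) (T : Type) (t : nat) (F : T -> T -> V)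
  (f : 'I_t -> T) (a : T) :
  \sum_(i < t + 1) \sum_(j < t + 1) F (ext_last f a i) (ext_last f a j) =
  \sum_i \sum_j F (f i) (f j) + \sum_i (F (f i) a + F a (f i)) + F a a.
Proof.
have sumE (G : T -> V) :
    \sum_(i < t + 1) G (ext_last f a i) = \sum_i G (f i) + G a.
  rewrite big_split_ord big_ord1 /ext_last (unsplitK (inr _ ord0)).
  by congr (_ + _); apply: eq_bigr => i _; rewrite (unsplitK (inl _ i)).
rewrite (sumE (fun z => \sum_(j < t + 1) F z (ext_last f a j))).
under eq_bigr => i _ do rewrite (sumE (F (f i))).
by rewrite (sumE (F a)) !big_split /= !addrA.
Qed.

Section KernelMatrices.
Variables (R : rcfType) (d : nat) (D : 'rV[R]_d -> Prop).
Variable k : 'rV[R]_d -> 'rV[R]_d -> R.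
Hypothesis k_pd : pd_kernel D k.
Variables (t : nat) (xs : 'I_t -> 'rV[R]_d).
Hypothesis xsD : forall i, D (xs i).

Lemma gram_formE (u : 'rV[R]_t) :
  (u *m gram k xs *m u^T) 0 0 =
  \sum_i \sum_j u 0 i * u 0 j * k (xs i) (xs j).
Proof.
rewrite !mxE; under eq_bigr do rewrite !mxE big_distrl /=.
rewrite exchange_big /=; apply: eq_bigr => i _; apply: eq_bigr => j _.
by rewrite !mxE; ring.
Qed.

Lemma trmx_gram : (gram k xs)^T = gram k xs.
Proof. by apply/matrixP => i j; rewrite !mxE; apply: k_pd.1. Qed.

Lemma gram_form_ge0 (u : 'rV[R]_t) : 0 <= (u *m gram k xs *m u^T) 0 0.
Proof. by rewrite gram_formE; apply: k_pd.2. Qed.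

Lemma gram_kvec_form_ge0 (x : 'rV[R]_d) (u : 'rV[R]_t) : D x ->
  0 <= (u *m gram k xs *m u^T) 0 0 - 2 * (u *m kvec k xs x) 0 0 + k x x.
Proof.
move=> Dx; have [k_sym k_psd] := k_pd.
pose p := ext_last (fun j => (xs j, u 0 j)) (x, -1).
have pD i : D (p i).1 by rewrite /p /ext_last; case: split.
have := k_psd _ (fun i => (p i).1) (fun i => (p i).2) pD.
rewrite (sum_ext_last2 (fun z w => z.2 * w.2 * k z.1 w.1)) /= -gram_formE.
have -> : \sum_i (u 0 i * -1 * k (xs i) x + -1 * u 0 i * k x (xs i)) =
          - 2 * (u *m kvec k xs x) 0 0.
  rewrite mxE mulr_sumr; apply: eq_bigr => i _.
  by rewrite !mxE (k_sym x) //; ring.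
lra.
Qed.

Lemma gram_add_scalar_unitmx (lam : R) : 0 < lam ->
  gram k xs + lam%:M \in unitmx.
Proof. exact/psd_add_scalar_unitmx/gram_form_ge0. Qed.

Definition gp_weights (lam : R) (x : 'rV[R]_d) : 'rV[R]_t :=
  (kvec k xs x)^T *m invmx (gram k xs + lam%:M).

Lemma gp_meanB (lam : R) (Y Y' : 'cV[R]_t) (x : 'rV[R]_d) :
  gp_mean k lam xs Y x - gp_mean k lam xs Y' x =
  (gp_weights lam x *m (Y - Y')) 0 0.
Proof. by rewrite /gp_mean mulmxBr !mxE. Qed.

Lemma gp_var_ge (lam : R) (x : 'rV[R]_d) : 0 < lam -> D x ->
  lam * (gp_weights lam x *m (gp_weights lam x)^T) 0 0 <= gp_var k lam xs x.
Proof.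
move=> lam_gt0 Dx; set w := gp_weights lam x.
have wA : w *m (gram k xs + lam%:M) = (kvec k xs x)^T.
  by rewrite -mulmxA mulVmx ?mulmx1 // gram_add_scalar_unitmx.
have wk : (w *m kvec k xs x) 0 0 =
          (w *m gram k xs *m w^T) 0 0 + lam * (w *m w^T) 0 0.
  rewrite -form_add_scalar_mx -mulmxA -[kvec k xs x]trmxK -wA trmx_mul.
  by rewrite raddfD /= trmx_gram tr_scalar_mx.
have := gram_kvec_form_ge0 w Dx.
rewrite /gp_var -/(gp_weights lam x) -/w.
lra.
Qed.

End KernelMatrices.

Theorem lemma2 (R : rcfType) (d : nat) (D : 'rV[R]_d -> Prop)
  (k : 'rV[R]_d -> 'rV[R]_d -> R) (eps : R)
  (fstar ftilde : 'rV[R]_d -> R) (t : nat) (xs : 'I_t -> 'rV[R]_d)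
  (eta : 'I_t -> R) (lam : R) :
  pd_kernel D k -> 0 <= eps ->
  (forall x, D x -> `|ftilde x - fstar x| <= eps) ->
  (0 < t)%N -> (forall i, D (xs i)) -> 0 < lam ->
  let m := fun x => fstar x - ftilde x in
  let Ystar : 'cV[R]_t := \col_i (fstar (xs i) + eta i) in
  let Y : 'cV[R]_t := \col_i (fstar (xs i) + eta i - m (xs i)) in
  forall x, D x ->
    `|gp_mean k lam xs Y x - gp_mean k lam xs Ystar x|
      <= eps * Num.sqrt t%:R / Num.sqrt lam * Num.sqrt (gp_var k lam xs x).
Proof.
move=> k_pd eps_ge0 f_close _ xsD lam_gt0 m Ystar Y x Dx.
rewrite gp_meanB -[Y - Ystar]trmxK.
set w := gp_weights k xs lam x; set c := (Y - Ystar)^T; set V := gp_var _ _ _ _.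
have c_le : (c *m c^T) 0 0 <= t%:R * eps ^+ 2.
  apply: mulmx_trmx_le => i; rewrite !mxE /m.
  by rewrite (_ : _ - _ = ftilde (xs i) - fstar (xs i)) ?f_close //; ring.
have w_le : lam * (w *m w^T) 0 0 <= V := gp_var_ge k_pd xsD lam_gt0 Dx.
have V_ge0 : 0 <= V.
  by apply: le_trans _ w_le; apply: mulr_ge0; [exact: ltW | exact: mulmx_trmx_ge0].
have sq_le : (w *m c^T) 0 0 ^+ 2 <= (V / lam) * (t%:R * eps ^+ 2).
  apply: le_trans (CauchySchwarz_mx w c) _.
  apply: ler_pM; rewrite ?mulmx_trmx_ge0 //.
  by rewrite ler_pdivlMr // mulrC.
have -> : eps * Num.sqrt t%:R / Num.sqrt lam * Num.sqrt V =
          Num.sqrt (V / lam * (t%:R * eps ^+ 2)).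
  rewrite (sqrtrM _ (divr_ge0 V_ge0 (ltW lam_gt0))) (sqrtrM _ V_ge0).
  rewrite (sqrtrM _ (ler0n _ t)) sqrtr_sqr ger0_norm // sqrtrV ?ltW //.
  ring.
by rewrite -sqrtr_sqr ler_wsqrtr.
Qed.
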